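(* Let $\odot$ be a non-degenerate pseudo-multiplication and let $\tau$ be a $\sigma$-maxitive measure on a $\sigma$-algebra $\mathcal{B}$ on a nonempty set $E$ having the Radon–Nikodym property with respect to the idempotent $\odot$-integral. Then $\tau$ is semi-$\odot$-finite, i.e. for every $B\in\mathcal{B}$, $$\tau(B)=\sup\{\tau(A):A\in\mathcal{B},\ A\subset B,\ \tau(A)\text{ is }\odot\text{-finite}\}.$$
   Context: Write $\overline{\mathbb{R}}_+=[0,\infty]$. A pseudo-multiplication is a binary operation $\odot$ on $\overline{\mathbb{R}}_+$ with the following properties: - it is associative; - it is continuous on $(0,\infty)\times[0,\infty]$; - for every $t$, the map $s\mapsto s\odot t$ is continuous on $(0,\infty]$; - it is nondecreasing in each argument; - it has a left identity $1_\odot$, i.e. $1_\odot\odot t=t$ for all $t$; - it has no zero divisors, i.e. $s\odot t=0$ implies $s=0$ or $t=0$; - $0\odot t=t\odot 0=0$ for all $t$. Put $O(t)=\inf_{s>0}s\odot t$. An element $t$ is $\odot$-finite if $O(t)=0$, and $\odot$-infinite otherwise. The operation $\odot$ is non-degenerate if $1_\odot$ is $\odot$-finite. A $\sigma$-maxitive measure on $\mathcal{B}$ is a map $\nu:\mathcal{B}\to\overline{\mathbb{R}}_+$ with $\nu(\emptyset)=0$ and $\nu(\bigcup_j B_j)=\sup_j\nu(B_j)$ for every countable family. A map $f:E\to\overline{\mathbb{R}}_+$ is $\mathcal{B}$-measurable if $\{f>t\}\in\mathcal{B}$ for all $t\in[0,\infty)$. The idempotent $\odot$-integral is $\int^\infty_B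 f\odot d\tau=\sup_{t\in[0,\infty)}t\odot\tau(B\cap\{f>t\})$. $\nu\ll_\odot\tau$ means $\nu(B)\le\infty\odot\tau(B)$ for every $B\in\mathcal{B}$ with $\tau(B)$ $\odot$-finite. $\tau$ has the Radon–Nikodym property if every $\sigma$-maxitive $\nu\ll_\odot\tau$ admits a $\mathcal{B}$-measurable $c:E\to\overline{\mathbb{R}}_+$ with $\nu(B)=\int^\infty_B c\odot d\tau$ for all $B\in\mathcal{B}$. *)

From Stdlib Require Import Reals.
Open Scope R_scope.

Record nnR := mknn { nnval : R; nnpos : 0 <= nnval }.

Inductive ER := Fin (x : nnR) | Inf.

Definition ERzero : ER := Fin (mknn 0 (Rle_refl 0)).

Definition ERle (x y : ER) : Prop :=
  match x, y with
  | Fin a, Fin b => nnval a <= nnval b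
  | _, Inf => True
  | Inf, Fin _ => False
  end.

Definition ERlt (x y : ER) : Prop :=
  match x, y with
  | Fin a, Fin b => nnval a < nnval b
  | Fin _, Inf => True
  | Inf, _ => False
  end.

Definition is_sup (S : ER -> Prop) (s : ER) : Prop :=
  (forall x, S x -> ERle x s) /\
  (forall u, (forall x, S x -> ERle x u) -> ERle s u).

Definition is_inf (S : ER -> Prop) (s : ER) : Prop :=
  (forall x, S x -> ERle s x) /\
  (forall u, (forall x, S x -> ERle u x) -> ERle u s).

(** The order topology on [0,oo] is metrized by d(x,y) = |phi x - phi y|
    with the order isomorphism phi : [0,oo] -> [0,1], x |-> x/(1+x), oo |-> 1. *)
Definition ERphi (x : ER) : R :=
  match x with
  | Fin a => nnval a / (1 + nnval a)
  | Inf => 1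
  end.

Definition ERdist (x y : ER) : R := Rabs (ERphi x - ERphi y).

Definition is_pseudo_mult (op : ER -> ER -> ER) (one : ER) : Prop :=
  (forall s t u, op (op s t) u = op s (op t u)) /\
  (forall s0 : nnR, forall t0 : ER, 0 < nnval s0 ->
     forall eps, 0 < eps -> exists delta, 0 < delta /\
       forall (s : nnR) (t : ER), 0 < nnval s ->
         ERdist (Fin s) (Fin s0) < delta -> ERdist t t0 < delta ->
         ERdist (op (Fin s) t) (op (Fin s0) t0) < eps) /\
  (forall t s0, ERlt ERzero s0 ->
     forall eps, 0 < eps -> exists delta, 0 < delta /\
       forall s, ERlt ERzero s -> ERdist s s0 < delta ->
         ERdist (op s t) (op s0 t) < eps) /\
  (forall s s' t, ERle s s' -> ERle (op s t) (op s' t)) /\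
  (forall s t t', ERle t t' -> ERle (op s t) (op s t')) /\
  (forall t, op one t = t) /\
  (forall s t, op s t = ERzero -> s = ERzero \/ t = ERzero) /\
  (forall t, op ERzero t = ERzero /\ op t ERzero = ERzero).

Definition odot_finite (op : ER -> ER -> ER) (t : ER) : Prop :=
  is_inf (fun x => exists s, ERlt ERzero s /\ x = op s t) ERzero.

Definition non_degenerate (op : ER -> ER -> ER) (one : ER) : Prop :=
  odot_finite op one.

Definition is_sigma_algebra {E : Type} (B : (E -> Prop) -> Prop) : Prop :=
  B (fun _ => False) /\
  (forall A, B A -> B (fun x => ~ A x)) /\
  (forall F : nat -> (E -> Prop), (forall n, B (F n)) ->
     B (fun x => exists n, F n x)).

Definition sigma_maxitive {E : Type} (B : (E -> Prop) -> Prop)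
    (nu : (E -> Prop) -> ER) : Prop :=
  nu (fun _ => False) = ERzero /\
  (forall F : nat -> (E -> Prop), (forall n, B (F n)) ->
     is_sup (fun y => exists n, y = nu (F n)) (nu (fun x => exists n, F n x))).

Definition measurable {E : Type} (B : (E -> Prop) -> Prop) (f : E -> ER) : Prop :=
  forall t : nnR, B (fun x => ERlt (Fin t) (f x)).

Definition idem_integral {E : Type} (op : ER -> ER -> ER)
    (tau : (E -> Prop) -> ER) (A : E -> Prop) (f : E -> ER) (v : ER) : Prop :=
  is_sup (fun y => exists t : nnR,
            y = op (Fin t) (tau (fun x => A x /\ ERlt (Fin t) (f x)))) v.

Definition abs_cont {E : Type} (op : ER -> ER -> ER) (B : (E -> Prop) -> Prop)
    (nu tau : (E -> Prop) -> ER) : Prop :=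
  forall A, B A -> odot_finite op (tau A) -> ERle (nu A) (op Inf (tau A)).

Definition radon_nikodym_property {E : Type} (op : ER -> ER -> ER)
    (B : (E -> Prop) -> Prop) (tau : (E -> Prop) -> ER) : Prop :=
  forall nu, sigma_maxitive B nu -> abs_cont op B nu tau ->
    exists c : E -> ER, measurable B c /\
      forall A, B A -> idem_integral op tau A c (nu A).

Definition semi_odot_finite {E : Type} (op : ER -> ER -> ER)
    (B : (E -> Prop) -> Prop) (tau : (E -> Prop) -> ER) : Prop :=
  forall A, B A ->
    is_sup (fun y => exists A', B A' /\ (forall x, A' x -> A x) /\
                                odot_finite op (tau A') /\ y = tau A') (tau A).

(** Let [tau] be a sigma-maxitive measure with the Radon–Nikodym property for
    the idempotent (.)-integral, [A] a measurable set and [U] an upper bound of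
    the values [tau A'] over the measurable [A' ⊆ A] with (.)-finite [tau A'].
    If [tau A] were not below [U], consider the two-valued "threshold measure"
      [nu P = 0] if [tau (P ∩ A) <= U],   [nu P = 1] otherwise.
    It is sigma-maxitive (the sublevel set [{x <= U}] is closed under suprema)
    and absolutely continuous w.r.t. [tau] (a (.)-finite [tau P] forces
    [tau (P ∩ A) <= U]).  Let [c] be its density.  Since [nu A = 1 <> 0], some
    level set [P = A ∩ {c > t}] has [t (.) tau P <> 0] and [t (.) tau P <= nu P
    <= 1]; by associativity and non-degeneracy this bound makes [tau P]
    (.)-finite, hence [nu P = 0], contradicting [t (.) tau P <> 0]. *)

From Stdlib Require Import Reals.
From Stdlib Require Import Classical ClassicalEpsilon FunctionalExtensionality
  PropExtensionality ProofIrrelevance Lra.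

Lemma nn_eq (a b : nnR) : nnval a = nnval b -> a = b.
Proof.
  destruct a as [a pa], b as [b pb]; simpl; intros ->.
  f_equal; apply proof_irrelevance.
Qed.

Lemma ERle_refl (x : ER) : ERle x x.
Proof. destruct x; simpl; auto; lra. Qed.

Lemma ERle_trans (x y z : ER) : ERle x y -> ERle y z -> ERle x z.
Proof. destruct x, y, z; simpl; auto; try lra; tauto. Qed.

Lemma ERle_zero (x : ER) : ERle ERzero x.
Proof. destruct x as [[b pb]|]; simpl; auto. Qed.

Lemma ERle_zero_eq (x : ER) : ERle x ERzero -> x = ERzero.
Proof.
  destruct x as [[b pb]|]; simpl; [|tauto]. intros H.
  unfold ERzero; f_equal; apply nn_eq; simpl; lra.
Qed.

Lemma ERlt_zero (x : ER) : x <> ERzero -> ERlt ERzero x.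
Proof.
  destruct x as [[b pb]|]; simpl; auto. intros H.
  destruct (Rle_lt_or_eq_dec 0 b pb) as [h|h]; auto.
  exfalso; apply H; unfold ERzero; f_equal; apply nn_eq; simpl; auto.
Qed.

Lemma is_sup_nonzero (S : ER -> Prop) (v : ER) :
  is_sup S v -> v <> ERzero -> exists x, S x /\ x <> ERzero.
Proof.
  intros [_ Hleast] Hv. apply NNPP; intros Hnone. apply Hv.
  apply ERle_zero_eq, Hleast. intros x Hx.
  destruct (classic (x = ERzero)) as [-> | Hx0]; [apply ERle_refl|].
  exfalso; eauto.
Qed.

Lemma pred_ext {E : Type} (P Q : E -> Prop) : (forall x, P x <-> Q x) -> P = Q.
Proof.
  intros H; apply functional_extensionality; intros x.
  apply propositional_extensionality; auto.
Qed.

Definition two_sets {E : Type} (P Q : E -> Prop) (n : nat) : E -> Prop :=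
  match n with 0 => P | _ => Q end.

Lemma sigma_algebra_inter {E : Type} (B : (E -> Prop) -> Prop) :
  is_sigma_algebra B -> forall P Q, B P -> B Q -> B (fun x => P x /\ Q x).
Proof.
  intros [_ [Hcompl Hunion]] P Q HP HQ.
  set (F := two_sets (fun x => ~ P x) (fun x => ~ Q x)).
  assert (HF : forall n, B (F n)) by (intros [|n]; simpl; auto).
  (* P ∩ Q is the complement of (¬P) ∪ (¬Q) *)
  replace (fun x => P x /\ Q x) with (fun x => ~ exists n, F n x)
    by (apply pred_ext; intros x; split;
        [ intros H; split; apply NNPP; intros H'; apply H;
          [exists 0%nat | exists 1%nat]; exact H'
        | intros [h1 h2] [[|n] Hn]; simpl in Hn; auto ]).
  apply Hcompl, Hunion, HF.
Qed.

(** Maxitivity on the pair [P ⊆ Q] gives monotonicity. *)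
Lemma sigma_maxitive_mono {E : Type} (B : (E -> Prop) -> Prop)
    (tau : (E -> Prop) -> ER) :
  sigma_maxitive B tau -> forall P Q, B P -> B Q -> (forall x, P x -> Q x) ->
  ERle (tau P) (tau Q).
Proof.
  intros [_ Hmax] P Q HP HQ HPQ.
  assert (HF : forall n, B (two_sets P Q n)) by (intros [|n]; simpl; auto).
  destruct (Hmax _ HF) as [Hub _].
  replace (fun x => exists n, two_sets P Q n x) with Q in Hub
    by (apply pred_ext; intros x; split;
        [ intros h; exists 1%nat; exact h
        | intros [[|n] h]; simpl in h; auto ]).
  apply Hub. exists 0%nat; reflexivity.
Qed.

(** A left identity is nonzero: [0 = 1] would give [oo = 1 (.) oo = 0]. *)
Lemma left_identity_neq_zero (op : ER -> ER -> ER) (one : ER)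
    (Hid : forall t, op one t = t) (Habs : forall t, op ERzero t = ERzero) :
  one <> ERzero.
Proof. intros h. pose proof (Hid Inf) as h1. rewrite h, Habs in h1. discriminate. Qed.

Lemma odot_finite_le (op : ER -> ER -> ER)
    (Hmono : forall s t t', ERle t t' -> ERle (op s t) (op s t')) (x y : ER) :
  ERle y x -> odot_finite op x -> odot_finite op y.
Proof.
  intros Hyx [_ Hx]. split; [intros; apply ERle_zero|].
  intros L HL. apply Hx. intros z [s [hs ->]].
  apply ERle_trans with (op s y); [apply HL; eauto | apply Hmono; auto].
Qed.

(** If [a (.) x <= 1] for some [a > 0], then [x] is (.)-finite: indeed
    [s (.) x <= (s (.) a) (.) x = s (.) (a (.) x) <= s (.) 1], and
    [s (.) a > 0] ranges over arbitrarily small factors of [1]. *)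
Lemma odot_finite_of_bounded (op : ER -> ER -> ER) (one : ER)
    (Hassoc : forall s t u, op (op s t) u = op s (op t u))
    (Hmono : forall s t t', ERle t t' -> ERle (op s t) (op s t'))
    (Hzd : forall s t, op s t = ERzero -> s = ERzero \/ t = ERzero)
    (Hnd : non_degenerate op one) (a x : ER) :
  ERlt ERzero a -> ERle (op a x) one -> odot_finite op x.
Proof.
  intros Ha Hax. split; [intros; apply ERle_zero|].
  intros L HL. apply (proj2 Hnd). intros z [s [hs ->]].
  apply ERle_trans with (op (op s a) x).
  - apply HL. exists (op s a); split; auto.
    apply ERlt_zero; intros h. destruct (Hzd _ _ h) as [-> | ->];
      simpl in *; lra.
  - rewrite Hassoc. apply Hmono; auto.
Qed.

Section ThresholdMeasure.

Variables (E : Type) (B : (E -> Prop) -> Prop) (tau : (E -> Prop) -> ER).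
Hypothesis HB : is_sigma_algebra B.
Hypothesis Htau : sigma_maxitive B tau.

Definition cut (U a x : ER) : ER :=
  if excluded_middle_informative (ERle x U) then ERzero else a.

(** The sublevel set [{x <= U}] is closed under suprema, so [cut U a]
    commutes with countable suprema. *)
Lemma cut_sup (U a : ER) (x : nat -> ER) (v : ER) :
  is_sup (fun y => exists n, y = x n) v ->
  is_sup (fun y => exists n, y = cut U a (x n)) (cut U a v).
Proof.
  intros [Hub Hleast]. unfold cut at 2.
  destruct excluded_middle_informative as [HvU | HvU].
  - split; [| intros; apply ERle_zero].
    intros y [n ->]. unfold cut.
    destruct excluded_middle_informative as [_ | HxU]; [apply ERle_refl|].
    exfalso; apply HxU, ERle_trans with v; eauto.
  - (* some [x n] lies above [U], so [a] is attained *)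
    assert (Habove : exists n, ~ ERle (x n) U).
    { apply NNPP; intros Hn. apply HvU, Hleast.
      intros y [n ->]. apply NNPP; eauto. }
    destruct Habove as [n Hn]. split.
    + intros y [m ->]. unfold cut.
      destruct excluded_middle_informative; [apply ERle_zero | apply ERle_refl].
    + intros u Hu. specialize (Hu _ (ex_intro _ n eq_refl)).
      unfold cut in Hu. destruct excluded_middle_informative; tauto.
Qed.

Definition threshold_measure (A : E -> Prop) (U a : ER) (P : E -> Prop) : ER :=
  cut U a (tau (fun x => P x /\ A x)).

Lemma threshold_measure_sigma_maxitive (A : E -> Prop) (U a : ER) :
  B A -> sigma_maxitive B (threshold_measure A U a).
Proof.
  intros HA. unfold threshold_measure. split.
  - replace (fun x : E => False /\ A x) with (fun _ : E => False)
      by (apply pred_ext; tauto).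
    rewrite (proj1 Htau). unfold cut.
    destruct excluded_middle_informative as [_ | h]; auto.
    exfalso; apply h, ERle_zero.
  - intros F HF. apply cut_sup.
    replace (fun x => (exists n, F n x) /\ A x)
      with (fun x => exists n, F n x /\ A x)
      by (apply pred_ext; intros x; firstorder).
    apply (proj2 Htau). intros n. apply sigma_algebra_inter; auto.
Qed.

Lemma threshold_measure_abs_cont (op : ER -> ER -> ER)
    (Hmono : forall s t t', ERle t t' -> ERle (op s t) (op s t'))
    (A : E -> Prop) (U a : ER) :
  B A ->
  (forall P, B P -> (forall x, P x -> A x) -> odot_finite op (tau P) ->
     ERle (tau P) U) ->
  abs_cont op B (threshold_measure A U a) tau.
Proof.
  intros HA HU P HP Hfin. unfold threshold_measure, cut.
  destruct excluded_middle_informative as [_ | h]; [apply ERle_zero|].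
  exfalso; apply h.
  assert (HPA : B (fun x => P x /\ A x)) by (apply sigma_algebra_inter; auto).
  apply HU; [exact HPA | tauto |].
  apply odot_finite_le with (tau P); auto.
  apply sigma_maxitive_mono with B; auto. tauto.
Qed.

Lemma density_level_set (op : ER -> ER -> ER)
    (Habs : forall t, op ERzero t = ERzero)
    (nu : (E -> Prop) -> ER) (c : E -> ER) (A : E -> Prop) :
  measurable B c ->
  (forall P, B P -> idem_integral op tau P c (nu P)) ->
  B A -> nu A <> ERzero ->
  exists t : nnR, let P := fun x => A x /\ ERlt (Fin t) (c x) in
    B P /\ ERlt ERzero (Fin t) /\
    op (Fin t) (tau P) <> ERzero /\ ERle (op (Fin t) (tau P)) (nu P).
Proof.
  intros Hc Hdens HA HnuA.
  destruct (is_sup_nonzero _ _ (Hdens A HA) HnuA) as [y [[t ->] Hpos]].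
  exists t; intros P.
  assert (HP : B P) by (apply sigma_algebra_inter; auto).
  repeat split; auto.
  - apply ERlt_zero. intros h. apply Hpos. rewrite h. apply Habs.
  - (* on [P] the density already exceeds [t] *)
    apply (proj1 (Hdens P HP)). exists t. f_equal. f_equal.
    apply pred_ext; unfold P; tauto.
Qed.

End ThresholdMeasure.

Theorem mainTheorem9 (op : ER -> ER -> ER) (one : ER)
  (Hop : is_pseudo_mult op one) (Hnd : non_degenerate op one)
  (E : Type) (HE : inhabited E) (B : (E -> Prop) -> Prop)
  (HB : is_sigma_algebra B) (tau : (E -> Prop) -> ER)
  (Htau : sigma_maxitive B tau) (HRN : radon_nikodym_property op B tau) :
  semi_odot_finite op B tau.
Proof.
  destruct Hop as [Hassoc [_ [_ [_ [Hmono [Hid [Hzd Habs]]]]]]].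
  intros A HA. split.
  { intros y [A' [HA' [Hsub [_ ->]]]]. apply sigma_maxitive_mono with B; auto. }
  intros U HU. apply NNPP; intros HAU.
  assert (Hfam : forall P, B P -> (forall x, P x -> A x) ->
                 odot_finite op (tau P) -> ERle (tau P) U)
    by (intros P HP Hs Hf; apply HU; exists P; auto).
  set (nu := threshold_measure E tau A U one).
  destruct (HRN nu (threshold_measure_sigma_maxitive E B tau HB Htau A U one HA)
                (threshold_measure_abs_cont E B tau HB Htau op Hmono A U one HA Hfam))
    as [c [Hc Hdens]].
  assert (HnuA : nu A <> ERzero).
  { unfold nu, threshold_measure, cut.
    destruct excluded_middle_informative as [h | _].
    - replace (fun x => A x /\ A x) with A in h by (apply pred_ext; tauto).
      contradiction.
    - exact (left_identity_neq_zero op one Hid (fun t => proj1 (Habs t))). }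
  destruct (density_level_set E B tau HB op (fun t => proj1 (Habs t)) nu c A
              Hc Hdens HA HnuA) as [t [HP [Ht [Hnz Hle]]]].
  (* on the level set [P], [nu P] is [0] or [one]; both are impossible *)
  set (P := fun x => A x /\ ERlt (Fin t) (c x)) in *.
  unfold nu, threshold_measure, cut in Hle.
  replace (fun x => P x /\ A x) with P in Hle by (apply pred_ext; unfold P; tauto).
  destruct excluded_middle_informative as [_ | HPU].
  - apply Hnz, ERle_zero_eq, Hle.
  - apply HPU, Hfam; [exact HP | unfold P; tauto |].
    exact (odot_finite_of_bounded op one Hassoc Hmono Hzd Hnd (Fin t) _ Ht Hle).
Qed.
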